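(* Consider the $3$-SAT Hamiltonian in Ising spins $\sigma_i\in\{\pm1\}$, $$\mathcal{H}=\frac{M}{8}-\sum_{i=1}^N H_i\sigma_i-\sum_{i<j}T_{ij}\sigma_i\sigma_j-\sum_{i<j<k}J_{ijk}\sigma_i\sigma_j\sigma_k .$$ A quadratic penalty formulation of this Hamiltonian is not possible in Ising spins; precisely, there is no real polynomial $p(\sigma_j,\sigma_k,y)$ in three variables with $\deg p\le 2$ such that (P.1) $p(\sigma_j,\sigma_k,y)\ge 0$ for all $(\sigma_j,\sigma_k,y)\in\{\pm1\}^3$, and (P.2) for $(\sigma_j,\sigma_k,y)\in\{\pm1\}^3$, $p(\sigma_j,\sigma_k,y)=0$ if and only if $\sigma_j\sigma_k=y$. Hence the cubic terms $\sigma_i\sigma_j\sigma_k$ cannot be replaced by $\sigma_i y_{jk}$ with an ancillary spin $y_{jk}\in\{\pm1\}$ enforced by such a quadratic penalty.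
   Context: The $3$-SAT instance has $M$ clauses $C_1,\dots,C_M$ and $N$ variables represented as Ising spins $\sigma_i\in\{\pm1\}$; $c_{\mu,i}=1$ if $\sigma_i$ appears in clause $C_\mu$ and $c_{\mu,i}=-1$ otherwise, and $H_i=\frac18\sum_\mu c_{\mu,i}$, $T_{ij}=-\frac18\sum_\mu c_{\mu,i}c_{\mu,j}$, $J_{ijk}=\frac18\sum_\mu c_{\mu,i}c_{\mu,j}c_{\mu,k}$. A quadratic penalty formulation means introducing, for pairs $(j,k)$, ancillary spins $y_{jk}\in\{\pm1\}$, constants $\mu_k\ge0$ and penalty functions $p_k$ of degree at most $2$ satisfying (P.1) and (P.2), and replacing $\sum J_{ijk}\sigma_i\sigma_j\sigma_k$ by $\sum J_{ijk}\sigma_i y_{jk}+\sum_k\mu_k p_k(\sigma_j,\sigma_k,y_{jk})$. *)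

From Stdlib Require Import Reals.
Open Scope R_scope.

Definition is_spin (x : R) : Prop := x = 1 \/ x = -1.

(* A general real polynomial of degree at most 2 in three variables
   (x1, x2, x3) = (sigma_j, sigma_k, y), given by its 10 coefficients:
   constant, linear, and all quadratic monomials. *)
Record quad3 : Type := Quad3 {
  q0 : R;
  q1 : R; q2 : R; q3 : R;
  q11 : R; q22 : R; q33 : R;
  q12 : R; q13 : R; q23 : R
}.

Definition eval_quad3 (p : quad3) (x1 x2 x3 : R) : R :=
  q0 p + q1 p * x1 + q2 p * x2 + q3 p * x3
  + q11 p * x1 ^ 2 + q22 p * x2 ^ 2 + q33 p * x3 ^ 2
  + q12 p * (x1 * x2) + q13 p * (x1 * x3) + q23 p * (x2 * x3).

Definition P1 (p : quad3) : Prop :=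
  forall sj sk y, is_spin sj -> is_spin sk -> is_spin y ->
    0 <= eval_quad3 p sj sk y.

Definition P2 (p : quad3) : Prop :=
  forall sj sk y, is_spin sj -> is_spin sk -> is_spin y ->
    (eval_quad3 p sj sk y = 0 <-> sj * sk = y).

(* A polynomial of degree at most 2 has no component along the character
   x1 x2 x3 of {+-1}^3, so its sum over the four points with x1 x2 = x3 equals
   its sum over the four points with x1 x2 = -x3.  A penalty satisfying (P.1)
   and (P.2) would make the first sum 0 and the second strictly positive. *)
From Stdlib Require Import Reals Lra.
Open Scope R_scope.

Lemma eval_quad3_parity_balance (p : quad3) :
  eval_quad3 p 1 1 1 + eval_quad3 p 1 (-1) (-1)
  + eval_quad3 p (-1) 1 (-1) + eval_quad3 p (-1) (-1) 1
  = eval_quad3 p 1 1 (-1) + eval_quad3 p 1 (-1) 1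
  + eval_quad3 p (-1) 1 1 + eval_quad3 p (-1) (-1) (-1).
Proof. unfold eval_quad3; ring. Qed.

Lemma is_spin_1 : is_spin 1.
Proof. now left. Qed.

Lemma is_spin_N1 : is_spin (-1).
Proof. now right. Qed.

Lemma P2_eval_eq0 (p : quad3) (sj sk y : R) :
  P2 p -> is_spin sj -> is_spin sk -> is_spin y -> sj * sk = y ->
  eval_quad3 p sj sk y = 0.
Proof. intros H2 Hj Hk Hy; apply (H2 _ _ _ Hj Hk Hy). Qed.

Theorem theorem3 : ~ (exists p : quad3, P1 p /\ P2 p).
Proof.
  intros [p [H1 H2]].
  pose proof is_spin_1 as S; pose proof is_spin_N1 as N.
  assert (Z1 : eval_quad3 p 1 1 1 = 0) by (apply P2_eval_eq0; auto; ring).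
  assert (Z2 : eval_quad3 p 1 (-1) (-1) = 0) by (apply P2_eval_eq0; auto; ring).
  assert (Z3 : eval_quad3 p (-1) 1 (-1) = 0) by (apply P2_eval_eq0; auto; ring).
  assert (Z4 : eval_quad3 p (-1) (-1) 1 = 0) by (apply P2_eval_eq0; auto; ring).
  assert (Hpos : eval_quad3 p 1 1 (-1) <> 0)
    by (intro E; apply (H2 _ _ _ S S N) in E; lra).
  pose proof (H1 _ _ _ S S N); pose proof (H1 _ _ _ S N S);
  pose proof (H1 _ _ _ N S S); pose proof (H1 _ _ _ N N N).
  pose proof (eval_quad3_parity_balance p).
  lra.
Qed.
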